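(* For every type vector $\kappa$: (1) If $\mathbb{E}[f(x)]<c$, then $G_{IC}(\kappa)=G^*_{IC}(\kappa)=\{\varnothing\}$. (2) If $\mathbb{E}[f(x)]\ge c$, then $G_{IC}(\kappa)\supseteq G_C(\kappa)$ and $G^*_{IC}(\kappa)\supseteq G^*_C(\kappa)$.
   Context: Model. There are $N\ge 2$ agents $I=\{1,\dots,N\}$. Each agent $i$ has a private type $k_i\in X$; types are drawn i.i.d. from a prior distribution $H$ on $X$, and $\kappa=(k_1,\dots,k_N)$ is the type vector. There is a function $f:X\to\mathbb{R}_{>0}$, a link cost $c>0$ and a decay factor $\delta\in(0,1)$; $\mathbb{E}[f(x)]=\int_X f\,dH$ is assumed well defined. A network ${\bf g}$ is a set of unordered pairs $ij$ ($i\neq j$), called links. Agents $i,j$ are connected in ${\bf g}$ if there is a path of links between them; $d_{ij}$ is the length of a shortest such path ($\infty$ if not connected); $C_i$ denotes the component of ${\bf g}$ containing $i$. Agent $i$'s payoff is $u_i({\bf g})=\sum_{j\neq i,\ j\text{ connected to }i}\delta^{d_{ij}-1}f(k_j)-c\cdot\#\{j: ij\in{\bf g}\}$. Dynamics. The network is empty at $t=0$. In each period $t\ge1$ one unordered pair $(i,j)$ is selected; the sequence of selected pairs up to $t$ is the selection path $\gamma(t)$. The selected agents observe each other's components and simultaneously choose $a_{ij},a_{ji}\in\{0,1\}$ (1 = agree to form the link if absent / keep it if present, 0 = refuse / sever); after the period the link $ij$ is present iff $a_{ij}=a_{ji}=1$. Agents are myopic and play the stable optimistic equilibrium (SOE):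 agent $i$ chooses $1$ iff his expected current payoff (w.r.t. his belief) from the network resulting with the link $ij$ is at least his current payoff without it. Information. Under complete information every agent knows $\kappa$. Under incomplete information (simple updating rule), if $i$ and $j$ have ever been connected at some period so far, each knows the other's type; otherwise each one's belief about the other's type is the prior $H$. Emergence and stability. Given a selection path $\gamma(t)$, the resulting network ${\bf g}(\gamma(t))$ and beliefs $B(\gamma(t))$ are uniquely determined. A network ${\bf g}$ can emerge if ${\bf g}={\bf g}(\gamma(t))$ for some selection path $\gamma(t)$. A pair $({\bf g},B)$ is stable if no link is formed or severed along any subsequent selection path. The process can converge to ${\bf g}$ if for some selection path $\gamma(t)$, ${\bf g}={\bf g}(\gamma(t))$ and $({\bf g}(\gamma(t)),B(\gamma(t)))$ is stable. $G_C(\kappa)$ (resp. $G_{IC}(\kappa)$) is the set of networks that can emerge under complete (resp. incomplete) information, and $G^*_C(\kappa)$ (resp. $G^*_{IC}(\kappa)$) the set of networks to which the process can converge under complete (resp. incomplete) information. *)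

From HB Require Import structures.
From mathcomp Require Import all_boot all_order all_algebra.
Set Implicit Arguments. Unset Strict Implicit. Unset Printing Implicit Defensive.
Import Order.TTheory GRing.Theory Num.Theory.
Local Open Scope ring_scope.

(* A network on agents 'I_N: a set of ordered pairs; a link ij is stored as
   both (i,j) and (j,i).  All networks arising from the dynamics are
   symmetric and irreflexive. The empty network is set0. *)
Definition network (N : nat) := {set 'I_N * 'I_N}.

Fixpoint reach (N : nat) (g : network N) (k : nat) (i j : 'I_N) : bool :=
  match k with
  | 0 => i == j
  | k'.+1 => reach g k' i j || [exists m, reach g k' i m && ((m, j) \in g)]
  end.

(* i and j connected (paths of length <= N suffice among N agents) *)
Definition connected (N : nat) (g : network N) (i j : 'I_N) : bool :=
  reach g N i j.

Definition dist (N : nat) (g : network N) (i j : 'I_N) : nat :=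
  find (fun k => reach g k i j) (iota 0 N.+1).

Definition degree (N : nat) (g : network N) (i : 'I_N) : nat :=
  #|[set j | (i, j) \in g]|.

(* payoff of agent i in g, when agent i values agent j at v j
   (v j = f(k_j) if known, its expectation E[f] under the prior otherwise;
   payoffs are linear in the f(k_j), so expected payoff = this) *)
Definition payoff (R : realFieldType) (N : nat) (delta c : R)
    (g : network N) (v : 'I_N -> R) (i : 'I_N) : R :=
  \sum_(j : 'I_N | (j != i) && connected g i j) delta ^+ (dist g i j).-1 * v j
  - c * (degree g i)%:R.

Definition add_link (N : nat) (g : network N) (i j : 'I_N) : network N :=
  g :|: [set (i, j); (j, i)].
Definition del_link (N : nat) (g : network N) (i j : 'I_N) : network N :=
  g :\: [set (i, j); (j, i)].

(* state = (network, set of pairs (i,j) such that i knows j's type, i.e.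
   i and j have been connected at some period so far) *)
Definition state (N : nat) := (network N * {set 'I_N * 'I_N})%type.

Definition init_state (N : nat) : state N := (set0, set0).

Definition valuation (R : realFieldType) (X : Type) (N : nat) (ci : bool)
    (f : X -> R) (Ef : R) (kappa : 'I_N -> X) (know : {set 'I_N * 'I_N})
    (i : 'I_N) : 'I_N -> R :=
  fun j => if ci || ((i, j) \in know) then f (kappa j) else Ef.

Definition agrees (R : realFieldType) (X : Type) (N : nat) (ci : bool)
    (f : X -> R) (Ef c delta : R) (kappa : 'I_N -> X) (st : state N)
    (i j : 'I_N) : bool :=
  let v := valuation ci f Ef kappa st.2 i in
  payoff delta c (del_link st.1 i j) v i <= payoff delta c (add_link st.1 i j) v i.

Definition step (R : realFieldType) (X : Type) (N : nat) (ci : bool)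
    (f : X -> R) (Ef c delta : R) (kappa : 'I_N -> X) (st : state N)
    (p : 'I_N * 'I_N) : state N :=
  let i := p.1 in let j := p.2 in
  let g' := if agrees ci f Ef c delta kappa st i j && agrees ci f Ef c delta kappa st j i
            then add_link st.1 i j else del_link st.1 i j in
  (g', st.2 :|: [set q | connected g' q.1 q.2]).

Definition run_from (R : realFieldType) (X : Type) (N : nat) (ci : bool)
    (f : X -> R) (Ef c delta : R) (kappa : 'I_N -> X) (st : state N)
    (s : seq ('I_N * 'I_N)) : state N :=
  foldl (step ci f Ef c delta kappa) st s.

Definition valid_path (N : nat) (s : seq ('I_N * 'I_N)) : bool :=
  all (fun p => p.1 != p.2) s.

Definition stable (R : realFieldType) (X : Type) (N : nat) (ci : bool)
    (f : X -> R) (Ef c delta : R) (kappa : 'I_N -> X) (st : state N) : Prop :=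
  forall s, valid_path s -> (run_from ci f Ef c delta kappa st s).1 = st.1.

(* G_C (ci = true) / G_IC (ci = false): networks that can emerge *)
Definition can_emerge (R : realFieldType) (X : Type) (N : nat) (ci : bool)
    (f : X -> R) (Ef c delta : R) (kappa : 'I_N -> X) (g : network N) : Prop :=
  exists s, valid_path s /\ (run_from ci f Ef c delta kappa (init_state N) s).1 = g.

(* G*_C / G*_IC: networks to which the process can converge *)
Definition can_converge (R : realFieldType) (X : Type) (N : nat) (ci : bool)
    (f : X -> R) (Ef c delta : R) (kappa : 'I_N -> X) (g : network N) : Prop :=
  exists s, valid_path s /\
    let st := run_from ci f Ef c delta kappa (init_state N) s in
    st.1 = g /\ stable ci f Ef c delta kappa st.

From HB Require Import structures.
From mathcomp Require Import all_boot all_order all_algebra.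
From mathcomp Require Import lra.
Set Implicit Arguments. Unset Strict Implicit. Unset Printing Implicit Defensive.
Import Order.TTheory GRing.Theory Num.Theory.

(* Everything rests on one estimate for the marginal gain of agent i from
   the link ij (the payoff with ij minus the payoff without it):
   - if ij is a bridge (i and j are not connected without it), the gain is
     at least i's valuation of j minus c;
   - if j has no link, the gain is at most i's valuation of j minus c;
   - the gain only depends on i's valuations of agents in i's component.
   (1) If E[f] < c, an agent never accepts a link to a stranger, so along
       any selection path the network stays empty and nobody learns a type.
   (2) If E[f] >= c, two strangers always agree to link.  A complete
       information run is simulated step by step under incomplete
       information: a step either leaves the complete-information network
       unchanged, or both dynamics take the same decision, because agents
       already know the types of their component and strangers accept.
       To reach a stable state, every pair of strangers is then selected
       twice: they link (and learn their types), then sever exactly as under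
       complete information.  Once all types are known both dynamics
       coincide, so stability transfers. *)

Section Connectivity.
Variable N : nat.
Implicit Types (g : network N) (i j m : 'I_N).

(* The adjacency relation of a network, to use the library's [connect]. *)
Definition adjacent g : rel 'I_N := fun x y => (x, y) \in g.

Lemma reach_monotone g k k' i j : (k <= k')%N -> reach g k i j -> reach g k' i j.
Proof. by move=> /subnK <-; elim: (k' - k)%N => [|d IH] //= h; rewrite IH. Qed.

Lemma reach_connect g k i j : reach g k i j -> connect (adjacent g) i j.
Proof.
elim: k j => [|k IH] j /=; first by move/eqP->; exact: connect0.
case/orP=> [/IH //|/existsP[x /andP[hx hxj]]].
exact: connect_trans (IH _ hx) (connect1 _).
Qed.

Lemma path_reach g i p : path (adjacent g) i p -> reach g (size p) i (last i p).
Proof.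
elim/last_ind: p => [|p x IH] //=.
rewrite rcons_path last_rcons size_rcons => /andP[hp he] /=.
by apply/orP; right; apply/existsP; exists (last i p); rewrite IH.
Qed.

(* Paths of length at most N suffice: [connected] is graph connectivity. *)
Lemma connectedE g i j : connected g i j = connect (adjacent g) i j.
Proof.
apply/idP/idP; first exact: reach_connect.
case/connectP=> p hp ->; case: (shortenP hp) => p' hp' hu _.
have hsize : (size p' <= N)%N.
  have /card_uniqP hcard := hu; have := max_card (mem (i :: p')).
  by rewrite hcard card_ord /= => /ltnW.
exact: reach_monotone hsize (path_reach hp').
Qed.

Definition symmetric_net g := forall x y, ((x, y) \in g) = ((y, x) \in g).

Lemma connected_sym g i j : symmetric_net g -> connected g i j = connected g j i.
Proof. by move=> hs; rewrite !connectedE; apply: sym_connect_sym => x y; apply: hs. Qed.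

Lemma connected_edge g i j : (i, j) \in g -> connected g i j.
Proof. by move=> h; rewrite connectedE connect1. Qed.

Lemma reach_sub g g' k i j : {subset g <= g'} -> reach g k i j -> reach g' k i j.
Proof.
move=> sg; elim: k j => [|k IH] j //=.
case/orP=> [/IH -> //|/existsP[x /andP[hx hxj]]].
by apply/orP; right; apply/existsP; exists x; rewrite IH // sg.
Qed.

Lemma connected_sub g g' i j : {subset g <= g'} -> connected g i j -> connected g' i j.
Proof. exact: reach_sub. Qed.

Lemma reach_set0 k i j : reach (set0 : network N) k i j = (i == j).
Proof.
elim: k j => [|k IH] j //=; rewrite IH.
by case: eqP => //= _; apply/negbTE/existsP => -[x]; rewrite in_set0 andbF.
Qed.

Lemma connected_set0 i j : connected (set0 : network N) i j = (i == j).
Proof. exact: reach_set0. Qed.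

Lemma find_antimonotone (P1 P2 : pred nat) s :
  (forall k, P1 k -> P2 k) -> (find P2 s <= find P1 s)%N.
Proof.
move=> h; elim: s => //= x s IH.
by case: (boolP (P1 x)) => [/h -> //| _]; case: (P2 x).
Qed.

Lemma dist_sub g g' i j : {subset g <= g'} -> (dist g' i j <= dist g i j)%N.
Proof. by move=> sg; apply: find_antimonotone => k; apply: reach_sub. Qed.

Lemma add_link_sym g i j : symmetric_net g -> symmetric_net (add_link g i j).
Proof.
move=> hs x y; rewrite /add_link !inE !xpair_eqE hs.
by case: (x == i); case: (x == j); case: (y == i); case: (y == j); rewrite /= ?orbT ?orbF.
Qed.

Lemma del_link_sym g i j : symmetric_net g -> symmetric_net (del_link g i j).
Proof.
move=> hs x y; rewrite /del_link !inE !xpair_eqE hs.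
by case: (x == i); case: (x == j); case: (y == i); case: (y == j); rewrite /= ?orbT ?orbF.
Qed.

Lemma sub_add_link g i j : {subset g <= add_link g i j}.
Proof. by move=> x; rewrite !inE => ->. Qed.

Lemma del_link_sub g i j : {subset del_link g i j <= g}.
Proof. by move=> x; rewrite !inE => /andP[_ ->]. Qed.

Lemma del_sub_add_link g i j : {subset del_link g i j <= add_link g i j}.
Proof. by move=> x /del_link_sub /sub_add_link. Qed.

Lemma del_link_id g i j : (i, j) \notin g -> (j, i) \notin g -> del_link g i j = g.
Proof.
move=> h1 h2; apply/setP => x; rewrite !inE.
case: (boolP (x \in g)) => hx; rewrite ?andbF ?andbT //.
by apply/negP => /orP[/eqP e|/eqP e]; subst; rewrite hx in h1 h2.
Qed.

Lemma add_linkC g i j : add_link g j i = add_link g i j.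
Proof. by rewrite /add_link [[set (j, i); _]]setUC. Qed.

Lemma del_linkC g i j : del_link g j i = del_link g i j.
Proof. by rewrite /del_link setUC. Qed.

Lemma add_link_idem g i j : add_link (add_link g i j) i j = add_link g i j.
Proof. by rewrite /add_link -setUA setUid. Qed.

Lemma del_add_link g i j : del_link (add_link g i j) i j = del_link g i j.
Proof. by rewrite /del_link /add_link setDUl setDv setU0. Qed.

Lemma connected_add_redundant g i j a m : symmetric_net g -> connected g i j ->
  connected (add_link g i j) a m -> connected g a m.
Proof.
move=> hs hij; rewrite !connectedE; apply: connect_sub a m => x y.
rewrite /adjacent /add_link !inE !xpair_eqE.
case/orP=> [h|/orP[/andP[/eqP-> /eqP->]|/andP[/eqP-> /eqP->]]].
- exact: connect1.
- by rewrite -connectedE.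
- by rewrite -connectedE connected_sym.
Qed.

Lemma connected_del_redundant g i j a m : symmetric_net g ->
  connected (del_link g i j) i j -> connected g a m -> connected (del_link g i j) a m.
Proof.
move=> hs hij; rewrite !connectedE; apply: connect_sub a m => x y hxy.
case: (boolP ((x, y) \in [set (i, j); (j, i)])) => hin.
  move: hin; rewrite !inE !xpair_eqE => /orP[/andP[/eqP-> /eqP->]|/andP[/eqP-> /eqP->]].
  - by rewrite -connectedE.
  - by rewrite -connectedE connected_sym //; apply: del_link_sym.
by apply: connect1; rewrite /adjacent /del_link inE hin.
Qed.

End Connectivity.

Section MarginalGain.
Local Open Scope ring_scope.
Variables (R : realFieldType) (N : nat) (delta c : R).
Hypotheses (delta_ge0 : 0 <= delta) (delta_le1 : delta <= 1).
Implicit Types (g : network N) (i j m : 'I_N) (v : 'I_N -> R).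

Definition weight g i m : R :=
  if (m != i) && connected g i m then delta ^+ (dist g i m).-1 else 0.

Lemma weight_ge0 g i m : 0 <= weight g i m.
Proof. by rewrite /weight; case: ifP => // _; apply: exprn_ge0. Qed.

Lemma weight_le1 g i m : weight g i m <= 1.
Proof. by rewrite /weight; case: ifP => // _; apply: exprn_ile1. Qed.

Lemma payoffE g v i :
  payoff delta c g v i = \sum_m weight g i m * v m - c * (degree g i)%:R.
Proof.
rewrite /payoff big_mkcond /=; congr (_ - _); apply: eq_bigr => m _.
by rewrite /weight; case: ifP; rewrite ?mul0r.
Qed.

Lemma degree_add_del g i j : i != j ->
  degree (add_link g i j) i = (degree (del_link g i j) i).+1.
Proof.
move=> hij; rewrite /degree.
have -> : [set m | (i, m) \in add_link g i j] = j |: [set m | (i, m) \in del_link g i j].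
  apply/setP => m; rewrite !inE !xpair_eqE eqxx /= (negbTE hij) /=.
  by case: (m == j); case: (m == i); rewrite /= ?andbT ?andbF ?orbT ?orbF.
by rewrite cardsU1 !inE !xpair_eqE !eqxx.
Qed.

Definition link_gain g i j v :=
  \sum_m (weight (add_link g i j) i m - weight (del_link g i j) i m) * v m - c.

Lemma payoff_gain g i j v : i != j ->
  payoff delta c (add_link g i j) v i - payoff delta c (del_link g i j) v i =
  link_gain g i j v.
Proof.
move=> hij; rewrite !payoffE degree_add_del // /link_gain -natr1.
under [X in _ = X - _]eq_bigr => m _ do rewrite mulrBl.
rewrite sumrB; set A := \sum_m _; set B := \sum_m _; set d := (degree _ _)%:R.
rewrite /=; lra.
Qed.

Lemma weight_monotone g i j m : weight (del_link g i j) i m <= weight (add_link g i j) i m.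
Proof.
rewrite /weight; case: ifP => [/andP[hm hc]|_]; last by case: ifP => // _; apply: exprn_ge0.
rewrite hm (connected_sub (@del_sub_add_link _ g i j) hc) /=.
apply: ler_wiXn2l => //; rewrite -!subn1 leq_sub2r //.
exact: dist_sub (@del_sub_add_link _ g i j).
Qed.

Lemma weight_neighbour g i j : i != j -> weight (add_link g i j) i j = 1.
Proof.
move=> hij; rewrite /weight eq_sym hij /=.
have hlink : (i, j) \in add_link g i j by rewrite /add_link !inE eqxx orbT.
rewrite connected_edge //.
suff -> : dist (add_link g i j) i j = 1%N by rewrite expr0.
have hN : (0 < N)%N by apply: leq_ltn_trans (leq0n i) (ltn_ord i).
rewrite /dist.
have -> : iota 0 N.+1 = [:: 0, 1 & iota 2 N.-1]%N by rewrite -(prednK hN).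
rewrite /= (negbTE hij) /=.
by case: existsP => // -[]; exists i; rewrite eqxx.
Qed.

Lemma weight_outside g i j m : ~~ connected (add_link g i j) i m ->
  weight (add_link g i j) i m = 0 /\ weight (del_link g i j) i m = 0.
Proof.
move=> hc; rewrite /weight (negbTE hc) andbF; split => //.
case: ifP => // /andP[_ h]; move: hc.
by rewrite (connected_sub (@del_sub_add_link _ g i j) h).
Qed.

(* A link to an agent without links only lets i reach that agent itself. *)
Lemma reach_isolated g i j k m : (forall x, (j, x) \notin g) -> m != j ->
  reach (add_link g i j) k i m = reach (del_link g i j) k i m.
Proof.
move=> hiso hm; apply/idP/idP; last exact: reach_sub (@del_sub_add_link _ g i j).
elim: k m hm => [|k IH] m hm //=.
case/orP => [/IH -> //|/existsP[x /andP[hx he]]].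
move: he; rewrite !inE !xpair_eqE (negbTE hm) andbF /=.
case/orP => [he|/andP[/eqP ex /eqP em]].
- have hxj : x != j by apply: contraNneq (hiso m) => <-.
  apply/orP; right; apply/existsP; exists x.
  by rewrite IH // /= !inE he !xpair_eqE (negbTE hm) andbF /= (negbTE hxj).
- by subst; apply/orP; left; apply: (reach_monotone (leq0n k)); rewrite /= eqxx.
Qed.

Lemma weight_isolated g i j m : (forall x, (j, x) \notin g) -> m != j ->
  weight (add_link g i j) i m = weight (del_link g i j) i m.
Proof.
move=> hiso hm; rewrite /weight /connected /dist reach_isolated //.
by rewrite (eq_find (a2 := fun k => reach (del_link g i j) k i m)) // => k; rewrite reach_isolated.
Qed.

Lemma gain_bridge g i j v : i != j -> ~~ connected (del_link g i j) i j ->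
  (forall m, 0 <= v m) -> v j - c <= link_gain g i j v.
Proof.
move=> hij hc hv; rewrite /link_gain lerD2r (bigD1 j) //= weight_neighbour //.
have -> : weight (del_link g i j) i j = 0 by rewrite /weight (negbTE hc) andbF.
rewrite subr0 mul1r lerDl; apply: sumr_ge0 => m _; apply: mulr_ge0 => //.
by rewrite subr_ge0 weight_monotone.
Qed.

Lemma gain_isolated g i j v : (forall x, (j, x) \notin g) ->
  (forall m, 0 <= v m) -> link_gain g i j v <= v j - c.
Proof.
move=> hiso hv; rewrite /link_gain lerD2r (bigD1 j) //= big1 ?addr0.
  rewrite -[leRHS]mul1r; apply: ler_wpM2r => //.
  have := weight_le1 (add_link g i j) i j; have := weight_ge0 (del_link g i j) i j.
  lra.
by move=> m hm; rewrite weight_isolated // subrr mul0r.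
Qed.

Lemma gain_local g i j v1 v2 :
  (forall m, m != i -> connected (add_link g i j) i m -> v1 m = v2 m) ->
  link_gain g i j v1 = link_gain g i j v2.
Proof.
move=> h; rewrite /link_gain; congr (_ - _); apply: eq_bigr => m _.
case: (boolP (m == i)) => [/eqP ->|hm]; first by rewrite /weight !eqxx /= subrr !mul0r.
case: (boolP (connected (add_link g i j) i m)) => [hc|hc]; first by rewrite h.
by case: (weight_outside hc) => -> ->; rewrite subrr !mul0r.
Qed.

Lemma gain_add_link g i j v : link_gain (add_link g i j) i j v = link_gain g i j v.
Proof. by rewrite /link_gain add_link_idem del_add_link. Qed.

End MarginalGain.

Section Dynamics.
Local Open Scope ring_scope.
Variables (R : realFieldType) (X : Type) (N : nat) (f : X -> R) (Ef c delta : R).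
Variable kappa : 'I_N -> X.
Hypotheses (f_ge0 : forall x, 0 <= f x) (Ef_ge0 : 0 <= Ef).
Hypotheses (delta_ge0 : 0 <= delta) (delta_le1 : delta <= 1).
Implicit Types (g : network N) (K : {set 'I_N * 'I_N}) (i j a m : 'I_N).

Local Notation F := (fun m => f (kappa m)).
Local Notation step_ ci := (step ci f Ef c delta kappa).
Local Notation run_ ci := (run_from ci f Ef c delta kappa).
Local Notation agree ci := (agrees ci f Ef c delta kappa).
Local Notation value ci := (valuation ci f Ef kappa).

Lemma valuation_ge0 ci K i m : 0 <= value ci K i m.
Proof. by rewrite /valuation; case: ifP. Qed.

Lemma agreesE ci st i j : i != j ->
  agree ci st i j = (0 <= link_gain delta c st.1 i j (value ci st.2 i)).
Proof. by move=> hij; rewrite /agrees -payoff_gain // subr_ge0. Qed.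

Lemma agrees_informed g K i j : i != j ->
  (forall m, m != i -> connected (add_link g i j) i m -> (i, m) \in K) ->
  agree false (g, K) i j = agree true (g, set0) i j.
Proof.
move=> hij hK; rewrite !agreesE //=; congr (_ <= _).
by apply: gain_local => m hm hc; rewrite /valuation /= hK.
Qed.

Lemma agrees_stranger g K i j : c <= Ef -> i != j -> ~~ connected g i j ->
  (i, j) \notin K -> agree false (g, K) i j.
Proof.
move=> cEf hij hcij hK; rewrite agreesE //=.
have hbridge : ~~ connected (del_link g i j) i j.
  by apply: contraNN hcij; apply: connected_sub; apply: del_link_sub.
have := gain_bridge c delta_ge0 delta_le1 hij hbridge (valuation_ge0 false K i).
rewrite /valuation /= (negbTE hK); lra.
Qed.

Definition ci_decision g i j := agree true (g, set0) i j && agree true (g, set0) j i.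

Definition ci_next g (p : 'I_N * 'I_N) :=
  if ci_decision g p.1 p.2 then add_link g p.1 p.2 else del_link g p.1 p.2.

Lemma step_ci st p : (step_ true st p).1 = ci_next st.1 p.
Proof. by case: st. Qed.

Lemma step_same_decision g K i j :
  agree false (g, K) i j && agree false (g, K) j i = ci_decision g i j ->
  step_ false (g, K) (i, j) =
  (ci_next g (i, j), K :|: [set q | connected (ci_next g (i, j)) q.1 q.2]).
Proof. by rewrite /step /ci_next /= => ->. Qed.

(* Invariant of complete-information runs: the network is symmetric and only
   agents worth at least c have links. *)
Definition valued_net g := symmetric_net g /\ forall a b, (a, b) \in g -> c <= F a.

Lemma valued_set0 : valued_net set0.
Proof. by split => [x y|a b]; rewrite !in_set0. Qed.

Lemma agree_ci_valued g K i j : valued_net g -> i != j -> agree true (g, K) i j -> c <= F j.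
Proof.
move=> [hs hg] hij; rewrite agreesE //= => hgain.
case: (boolP [exists x, (j, x) \in g]) => [/existsP[x /hg] //|hno].
have hiso : forall x, (j, x) \notin g.
  by move=> x; apply: contraNN hno => h; apply/existsP; exists x.
by have := gain_isolated c delta_ge0 delta_le1 i hiso (fun m => f_ge0 (kappa m)); lra.
Qed.

Lemma valued_ci_next g p : p.1 != p.2 -> valued_net g -> valued_net (ci_next g p).
Proof.
case: p => i j /= hij [hs hg]; rewrite /ci_next /ci_decision /=.
case: ifP => [/andP[hi hj]|_]; split.
- exact: add_link_sym.
- move=> a b; rewrite /add_link !inE !xpair_eqE.
  case/orP=> [/hg //|/orP[/andP[/eqP-> _]|/andP[/eqP-> _]]].
  + by apply: (agree_ci_valued (conj hs hg) _ hj); rewrite eq_sym.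
  + exact: (agree_ci_valued (conj hs hg) hij hi).
- exact: del_link_sym.
- by move=> a b /del_link_sub /hg.
Qed.

Lemma ci_keeps_bridge g i j : valued_net g -> i != j -> (i, j) \in g ->
  ~~ connected (del_link g i j) i j -> ci_decision g i j.
Proof.
move=> [hs hg] hij hin hbridge; have hji : j != i by rewrite eq_sym.
have hFi : c <= F i by apply: hg hin.
have hFj : c <= F j by apply: (hg j i); rewrite -hs.
have hbridge' : ~~ connected (del_link g j i) j i.
  by rewrite del_linkC connected_sym //; apply: del_link_sym.
have h1 := gain_bridge c delta_ge0 delta_le1 hij hbridge (fun m => f_ge0 (kappa m)).
have h2 := gain_bridge c delta_ge0 delta_le1 hji hbridge' (fun m => f_ge0 (kappa m)).
by rewrite /ci_decision !agreesE //=; apply/andP; split; lra.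
Qed.

(* Simulation invariant: off the diagonal, an agent knows exactly the types
   of the agents it is connected to. *)
Definition knows_component g K := forall a m, a != m -> ((a, m) \in K) = connected g a m.

Lemma knows_component_step g g' K : knows_component g K ->
  (forall a m, connected g a m -> connected g' a m) ->
  knows_component g' (K :|: [set q | connected g' q.1 q.2]).
Proof.
move=> hK hcc a m ham; rewrite !inE hK //=.
by case: (boolP (connected g a m)) => [/hcc ->|].
Qed.

Lemma same_decision_connected g K i j : i != j -> symmetric_net g ->
  knows_component g K -> connected g i j ->
  agree false (g, K) i j && agree false (g, K) j i = ci_decision g i j.
Proof.
move=> hij hs hK hcij.
have informed a b : a != b -> connected g a b -> agree false (g, K) a b = agree true (g, set0) a b.
  move=> hab hcab; apply: agrees_informed => // m hma hcm.
  by rewrite hK 1?eq_sym // (connected_add_redundant hs hcab hcm).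
by rewrite /ci_decision !informed // 1?eq_sym // connected_sym.
Qed.

Lemma simulate_step g K p : c <= Ef -> p.1 != p.2 -> valued_net g -> knows_component g K ->
  ci_next g p = g \/
  (step_ false (g, K) p).1 = ci_next g p /\
  knows_component (ci_next g p) (step_ false (g, K) p).2.
Proof.
case: p => i j cEf /= hij hval hK; have [hs _] := hval.
have hji : j != i by rewrite eq_sym.
have grow (g' : network N) : (forall a m, connected g a m -> connected g' a m) ->
    agree false (g, K) i j && agree false (g, K) j i = ci_decision g i j ->
    ci_next g (i, j) = g' -> ci_next g (i, j) = g \/
    (step_ false (g, K) (i, j)).1 = ci_next g (i, j) /\
    knows_component (ci_next g (i, j)) (step_ false (g, K) (i, j)).2.
  move=> hcc hdec hg'; right; rewrite (step_same_decision hdec).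
  by split => //; apply: knows_component_step hK _; rewrite hg'.
have absent : (i, j) \notin g -> ~~ ci_decision g i j -> ci_next g (i, j) = g.
  by move=> hin /negbTE hdec; rewrite /ci_next /= hdec del_link_id // -hs.
case: (boolP (connected g i j)) => hcij.
  have hdec := same_decision_connected hij hs hK hcij.
  case hci: (ci_decision g i j).
    by apply: (grow (add_link g i j)) => // [a m|]; [apply: connected_sub; apply: sub_add_link | rewrite /ci_next /= hci].
  case: (boolP ((i, j) \in g)) => hin; last by left; rewrite absent ?hci.
  have hcycle : connected (del_link g i j) i j.
    by apply/negPn/negP => /(ci_keeps_bridge hval hij hin); rewrite hci.
  apply: (grow (del_link g i j)) => //; last by rewrite /ci_next /= hci.
  by move=> a m; apply: connected_del_redundant.
have hdec : agree false (g, K) i j && agree false (g, K) j i.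
  by apply/andP; split; apply: agrees_stranger; rewrite // ?hK // connected_sym.
have hin : (i, j) \notin g by apply: contraNN hcij; apply: connected_edge.
case hci: (ci_decision g i j); last by left; rewrite absent ?hci.
apply: (grow (add_link g i j)); rewrite ?hdec ?hci //; last by rewrite /ci_next /= hci.
by move=> a m; apply: connected_sub; apply: sub_add_link.
Qed.


Lemma run_cat ci st s1 s2 : run_ ci st (s1 ++ s2) = run_ ci (run_ ci st s1) s2.
Proof. by rewrite /run_from foldl_cat. Qed.

Lemma run_rcons ci st s p : run_ ci st (rcons s p) = step_ ci (run_ ci st s) p.
Proof. by rewrite /run_from foldl_rcons. Qed.

Lemma valid_rcons (s : seq ('I_N * 'I_N)) p :
  valid_path (rcons s p) = valid_path s && (p.1 != p.2).
Proof. by rewrite /valid_path all_rcons andbC. Qed.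

Lemma simulate_run s : c <= Ef -> valid_path s ->
  valued_net (run_ true (init_state N) s).1 /\
  exists s', [/\ valid_path s',
    (run_ false (init_state N) s').1 = (run_ true (init_state N) s).1 &
    knows_component (run_ true (init_state N) s).1 (run_ false (init_state N) s').2].
Proof.
move=> cEf; elim/last_ind: s => [_|s p IH].
  split; first exact: valued_set0.
  by exists [::]; split => // a m ham; rewrite /= in_set0 connected_set0 (negbTE ham).
rewrite valid_rcons => /andP[hv hp]; have [hval [s' [hv' e' hK]]] := IH hv.
rewrite run_rcons step_ci; split; first exact: valued_ci_next.
have hst : run_ false (init_state N) s' =
    ((run_ true (init_state N) s).1, (run_ false (init_state N) s').2).
  by rewrite -e'; case: (run_ false _ s').
case: (simulate_step cEf hp hval hK) => [-> | [e2 hK2]]; first by exists s'.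
by exists (rcons s' p); rewrite valid_rcons hv' hp run_rcons hst e2.
Qed.

Lemma emerge_ci_ic g : c <= Ef ->
  can_emerge true f Ef c delta kappa g -> can_emerge false f Ef c delta kappa g.
Proof.
move=> cEf [s [hv <-]]; have [_ [s' [hv' e' _]]] := simulate_run cEf hv.
by exists s'.
Qed.

Definition sym_knowledge K := forall a b, ((a, b) \in K) = ((b, a) \in K).
Definition knows_connected g K := forall a m, a != m -> connected g a m -> (a, m) \in K.
Definition full_knowledge K := forall a m, a != m -> (a, m) \in K.

Lemma sym_knowledge_step g K : symmetric_net g -> sym_knowledge K ->
  sym_knowledge (K :|: [set q | connected g q.1 q.2]).
Proof. by move=> hs hK a b; rewrite !inE hK /= connected_sym. Qed.

(* Selecting twice a pair of strangers whose link complete information would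
   not form: they link and learn each other's type, then sever the link. *)
Lemma probe_pair g K i j : c <= Ef -> symmetric_net g -> ci_next g (i, j) = g ->
  i != j -> (i, j) \notin K -> knows_connected g K -> sym_knowledge K ->
  exists K2, [/\ run_ false (g, K) [:: (i, j); (i, j)] = (g, K2),
    {subset K <= K2}, (i, j) \in K2, knows_connected g K2 & sym_knowledge K2].
Proof.
move=> cEf hs hstat hij hK hcK hsK; have hji : j != i by rewrite eq_sym.
have hcij : ~~ connected g i j by apply: contraNN hK; apply: hcK.
have hnij : (i, j) \notin g by apply: contraNN hcij; apply: connected_edge.
set g1 := add_link g i j; set K1 := K :|: [set q | connected g1 q.1 q.2].
have first_step : step_ false (g, K) (i, j) = (g1, K1).
  have hjiK : (j, i) \notin K by rewrite -hsK.
  have hcji : ~~ connected g j i by rewrite connected_sym.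
  by rewrite /step /= !agrees_stranger.
have no_link : ci_decision g i j = false.
  apply/negP => hdec; move: hstat; rewrite /ci_next /= hdec => e.
  by move: hnij; rewrite -{1}e /add_link !inE eqxx orbT.
have informed a b : a != b -> add_link g a b = g1 ->
    agree false (g1, K1) a b = agree true (g, set0) a b.
  move=> hab e; have hK1 m : m != a -> connected (add_link g1 a b) a m -> (a, m) \in K1.
    by move=> _; rewrite -e add_link_idem e => hc; rewrite !inE hc orbT.
  by rewrite (agrees_informed hab hK1) !agreesE //= -e gain_add_link.
have second_step : step_ false (g1, K1) (i, j) = (g, K1 :|: [set q | connected g q.1 q.2]).
  rewrite /step /= (informed i j hij erefl) (informed j i hji (add_linkC g i j)).
  by move: no_link; rewrite /ci_decision => ->; rewrite /g1 del_add_link del_link_id // -hs.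
exists (K1 :|: [set q | connected g q.1 q.2]); split.
- by rewrite /run_from /= first_step second_step.
- by move=> x hx; rewrite !inE hx.
- by rewrite !inE /= connected_edge ?orbT // /g1 /add_link !inE eqxx orbT.
- by move=> a m _ h; rewrite !inE h orbT.
- by do 2?apply: sym_knowledge_step => //; apply: add_link_sym.
Qed.

Definition ci_stationary g := forall p : 'I_N * 'I_N, p.1 != p.2 -> ci_next g p = g.

Lemma probe_all g (L : seq ('I_N * 'I_N)) K : c <= Ef -> symmetric_net g ->
  ci_stationary g -> knows_connected g K -> sym_knowledge K ->
  exists s K2, [/\ valid_path s, run_ false (g, K) s = (g, K2), {subset K <= K2} &
    forall q, q \in L -> q.1 != q.2 -> q \in K2].
Proof.
move=> cEf hs hstat; elim: L K => [|[i j] L IH] K hcK hsK; first by exists [::], K; split.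
case: (boolP ((i != j) && ((i, j) \notin K))) => [/andP[hij hK]|known].
  have [K1 [e1 hsub hin hcK1 hsK1]] := probe_pair cEf hs (hstat (i, j) hij) hij hK hcK hsK.
  have [s [K2 [hv e2 hsub2 hL]]] := IH K1 hcK1 hsK1.
  exists ([:: (i, j); (i, j)] ++ s), K2; split.
  - by move: hv; rewrite /valid_path /= hij.
  - by rewrite run_cat e1.
  - by move=> x /hsub /hsub2.
  - by move=> q; rewrite inE => /orP[/eqP -> _|/hL //]; apply: hsub2.
have [s [K2 [hv e2 hsub2 hL]]] := IH K hcK hsK.
exists s, K2; split => // q; rewrite inE => /orP[/eqP -> /= hij|/hL //].
by apply: hsub2; move: known; rewrite hij /= negbK.
Qed.

Lemma step_full_knowledge g K p : p.1 != p.2 -> full_knowledge K ->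
  (step_ false (g, K) p).1 = ci_next g p /\ full_knowledge (step_ false (g, K) p).2.
Proof.
case: p => i j /= hij hK.
have informed a b : a != b -> agree false (g, K) a b = agree true (g, set0) a b.
  by move=> hab; apply: agrees_informed => // m hm _; apply: hK; rewrite eq_sym.
split; first by rewrite /step /ci_next /ci_decision /= !informed // eq_sym.
by move=> a m ham; rewrite /step /= !inE hK.
Qed.

Lemma run_full_knowledge s g K st : valid_path s -> full_knowledge K -> st.1 = g ->
  (run_ false (g, K) s).1 = (run_ true st s).1.
Proof.
elim: s g K st => [|p s IH] g K st; first by move=> _ _ <-.
case/andP => hp hv hK hg; have [e1 hK1] := step_full_knowledge g hp hK.
rewrite /run_from /= -/(run_ false _ s) -/(run_ true _ s).
rewrite [step_ false (g, K) p]surjective_pairing.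
by apply: IH => //; rewrite e1 step_ci hg.
Qed.

Lemma stable_full_knowledge g K st : full_knowledge K -> st.1 = g ->
  stable true f Ef c delta kappa st -> stable false f Ef c delta kappa (g, K).
Proof. by move=> hK hg hst s hv; rewrite (run_full_knowledge hv hK hg) hst. Qed.

Lemma stable_ci_stationary st : stable true f Ef c delta kappa st -> ci_stationary st.1.
Proof.
move=> hst p hp; rewrite -step_ci; apply: (hst [:: p]).
by rewrite /valid_path /= hp.
Qed.

(* Convergence: simulate the complete-information run, then probe all
   remaining strangers; full knowledge makes the final state stable. *)
Lemma converge_ci_ic g : c <= Ef ->
  can_converge true f Ef c delta kappa g -> can_converge false f Ef c delta kappa g.
Proof.
move=> cEf [s [hv /= [hg hstab]]].
have [[hs _] [s' [hv' e' hK]]] := simulate_run cEf hv.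
rewrite hg in hs e' hK; set K := (run_ false (init_state N) s').2 in hK.
have hcK : knows_connected g K by move=> a m ham hcm; rewrite hK.
have hsK : sym_knowledge K.
  move=> a b; case: (eqVneq a b) => [-> //|hab].
  by rewrite hK // hK 1?eq_sym // connected_sym.
have hstat : ci_stationary g by rewrite -hg; apply: stable_ci_stationary.
have [s2 [K2 [hv2 e2 _ hL]]] := probe_all (enum [set: 'I_N * 'I_N]) cEf hs hstat hcK hsK.
have hfull : full_knowledge K2 by move=> a m ham; apply: hL; rewrite ?mem_enum ?inE.
have hrun : run_ false (init_state N) (s' ++ s2) = (g, K2).
  by rewrite run_cat -e2 -e' /K -surjective_pairing.
exists (s' ++ s2); split; first by move: hv' hv2; rewrite /valid_path all_cat => -> ->.
by rewrite /= hrun; split => //; apply: stable_full_knowledge hfull hg hstab.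
Qed.

Definition silent (st : state N) := st.1 = set0 /\ forall a m, a != m -> (a, m) \notin st.2.

(* Under silence both agents face an isolated stranger worth E[f] < c. *)
Lemma silent_step st p : Ef < c -> p.1 != p.2 -> silent st -> silent (step_ false st p).
Proof.
case: st => g K; case: p => i j hEc /= hij [/= -> hK].
have refuse : agree false (set0, K) i j = false.
  rewrite agreesE //=; apply/negbTE; rewrite -ltNge.
  have hiso x : (j, x) \notin (set0 : network N) by rewrite in_set0.
  have := gain_isolated c delta_ge0 delta_le1 i hiso (valuation_ge0 false K i).
  by rewrite /valuation /= (negbTE (hK _ _ hij)); lra.
rewrite /step /= refuse /= /del_link set0D; split => // a m ham.
by rewrite !inE negb_or hK //= connected_set0.
Qed.

Lemma silent_run s st : Ef < c -> valid_path s -> silent st -> silent (run_ false st s).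
Proof.
move=> hEc; elim: s st => [|p s IH] st //= /andP[hp hv] h0.
exact: IH (silent_step hEc hp h0).
Qed.

Lemma silent_init : silent (init_state N).
Proof. by split => // a m _; rewrite in_set0. Qed.

Lemma costly_emerge g : Ef < c -> can_emerge false f Ef c delta kappa g <-> g = set0.
Proof.
move=> hEc; split => [[s [hv <-]]|->]; last by exists [::].
by case: (silent_run hEc hv silent_init).
Qed.

Lemma costly_converge g : Ef < c -> can_converge false f Ef c delta kappa g <-> g = set0.
Proof.
move=> hEc; split => [[s [hv /= [<- _]]]|->].
  by case: (silent_run hEc hv silent_init).
exists [::]; split => //=; split => // s hv.
by case: (silent_run hEc hv silent_init).
Qed.

End Dynamics.

Local Open Scope ring_scope.
Theorem theorem1 (R : realFieldType) (X : Type) (N : nat) (f : X -> R)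
    (Ef c delta : R) :
  (2 <= N)%N -> (forall x, 0 < f x) -> 0 < Ef -> 0 < c -> 0 < delta -> delta < 1 ->
  forall kappa : 'I_N -> X,
    (Ef < c ->
       (forall g : network N, can_emerge false f Ef c delta kappa g <-> g = set0) /\
       (forall g : network N, can_converge false f Ef c delta kappa g <-> g = set0)) /\
    (c <= Ef ->
       (forall g : network N,
          can_emerge true f Ef c delta kappa g -> can_emerge false f Ef c delta kappa g) /\
       (forall g : network N,
          can_converge true f Ef c delta kappa g -> can_converge false f Ef c delta kappa g)).
Proof.
move=> _ f_pos Ef_pos _ delta_pos delta_lt1 kappa.
have f_ge0 x : 0 <= f x by apply: ltW.
have Ef_ge0 := ltW Ef_pos; have delta_ge0 := ltW delta_pos; have delta_le1 := ltW delta_lt1.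
split=> [hEc|cEf]; split=> g.
- exact: costly_emerge.
- exact: costly_converge.
- exact: emerge_ci_ic.
- exact: converge_ci_ic.
Qed.
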